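(* Let $P^1,\dots,P^m\in\Delta^n$ be in general position, and let $L_0=L(P^1,\dots,P^m)$. Let $\Psi'$ be the $(m-1)\times(n-1)$ matrix with entries $\Psi'_{i,j}=P^{i+1}_{j+1}-P^1_{j+1}$ ($i=1,\dots,m-1$, $j=1,\dots,n-1$), and let $\boldsymbol b=(H(P^1)-H(P^2),\dots,H(P^1)-H(P^m))\in\mathbb{R}^{m-1}$, where $H(P)=-\sum_j P_j\log P_j$. Let $\boldsymbol\theta=(\theta_2,\dots,\theta_n)$ be any solution of $\Psi'\,{}^t\boldsymbol\theta={}^t\boldsymbol b$, and define $Q\in\Delta^n$ by $Q_1=(1+\sum_{j=2}^n e^{\theta_j})^{-1}$ and $Q_j=Q_1e^{\theta_j}$ for $j=2,\dots,n$. Put $Q^0=\pi(Q|L_0)$. Then $Q^0$ is the unique point in $L_0$ satisfying $D(P^i\|Q^0)=D(P^1\|Q^0)$ for $i=2,\dots,m$.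
   Context: $\Delta^n=\{Q=(Q_1,\dots,Q_n):Q_j>0,\ \sum_jQ_j=1\}$. $D(Q\|Q')=\sum_jQ_j\log(Q_j/Q'_j)$. Points $P^1,\dots,P^m\in\Delta^n$ are in general position if $P^2-P^1,\dots,P^m-P^1$ are linearly independent. $L(P^1,\dots,P^m)=\{\sum_i\lambda_iP^i:\sum_i\lambda_i=1\}\cap\Delta^n$. For $Q'\in\Delta^n$ and such an affine subspace $L$, $\pi(Q'|L)$ denotes the unique $Q\in L$ minimizing $D(Q\|Q')$. *)

From HB Require Import structures.
From mathcomp Require Import all_boot all_order all_algebra.
From mathcomp Require Import all_classical all_reals.
From mathcomp Require Import sequences exp.
Set Implicit Arguments. Unset Strict Implicit. Unset Printing Implicit Defensive.
Import Order.TTheory GRing.Theory Num.Theory.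
Local Open Scope ring_scope.

Section Defs.
Variable R : realType.

(* Points of R^n are functions 'I_n -> R (coordinate j+1 of the paper = index j). *)

Definition simplex (n : nat) (Q : 'I_n -> R) : Prop :=
  (forall j, 0 < Q j) /\ \sum_j Q j = 1.

Definition KL (n : nat) (Q Q' : 'I_n -> R) : R :=
  \sum_j Q j * ln (Q j / Q' j).

Definition entropy (n : nat) (P : 'I_n -> R) : R :=
  - \sum_j P j * ln (P j).

Definition general_position (m n : nat) (P : 'I_m.+1 -> 'I_n -> R) : bool :=
  row_free (\matrix_(i < m, j < n) (P (lift ord0 i) j - P ord0 j)).

Definition affL (m n : nat) (P : 'I_m -> 'I_n -> R) (Q : 'I_n -> R) : Prop :=
  (exists lam : 'I_m -> R, \sum_i lam i = 1 /\
       forall j, Q j = \sum_i lam i * P i j) /\ simplex Q.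

Definition is_Iproj (n : nat) (L : ('I_n -> R) -> Prop) (Q' Q0 : 'I_n -> R) : Prop :=
  L Q0 /\ forall Q, L Q -> KL Q0 Q' <= KL Q Q'.

Definition Psi' (m n : nat) (P : 'I_m.+1 -> 'I_n.+1 -> R) : 'M[R]_(m, n) :=
  \matrix_(i < m, j < n) (P (lift ord0 i) (lift ord0 j) - P ord0 (lift ord0 j)).

Definition bvec (m n : nat) (P : 'I_m.+1 -> 'I_n.+1 -> R) : 'cV[R]_m :=
  \col_(i < m) (entropy (P ord0) - entropy (P (lift ord0 i))).

Definition Q1theta (n : nat) (theta : 'cV[R]_n) : R :=
  (1 + \sum_(j < n) expR (theta j ord0))^-1.

Definition Qtheta (n : nat) (theta : 'cV[R]_n) : 'I_n.+1 -> R :=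
  fun k => match unlift ord0 k with
           | Some j => Q1theta theta * expR (theta j ord0)
           | None => Q1theta theta
           end.

End Defs.

From HB Require Import structures.
From mathcomp Require Import all_boot all_order all_algebra.
From mathcomp Require Import all_classical all_reals.
From mathcomp Require Import sequences exp topology normedtype derive.
From mathcomp Require Import ring lra.
Import Order.TTheory GRing.Theory Num.Theory.
Import numFieldNormedType.Exports.
Local Open Scope ring_scope.
Set Implicit Arguments. Unset Strict Implicit. Unset Printing Implicit Defensive.

(* A point X of L such that ln X - ln Q is orthogonal to every P^i - P^1 satisfies the
   Pythagorean identity D(Y||Q) = D(Y||X) + D(X||Q) for Y in L, hence, by Gibbs'
   inequality, it is the unique I-projection of Q onto L.  The choice of theta gives
   <P^i - P^1, ln Q> = H(P^1) - H(P^i), and with it the orthogonality of ln X - ln Q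
   becomes D(P^i||X) = D(P^1||X).  Such an X exists by duality: minimize the coercive
   function sum_j (Q_j e^(u_j) - P^1_j u_j) over the vectors u orthogonal to the
   directions of L; the critical point equation says that X = Q e^u lies in L. *)

Section Divergence.
Variables (R : realType) (N : nat).
Implicit Types (a X : 'I_N -> R).

Lemma KL_split a X : (forall j, 0 < a j) -> (forall j, 0 < X j) ->
  KL a X = \sum_j a j * ln (a j) - \sum_j a j * ln (X j).
Proof.
move=> a_gt0 X_gt0; rewrite /KL -sumrB; apply: eq_bigr => j _.
by rewrite ln_div ?posrE // mulrBr.
Qed.

(* With [s = sqrt x] and [t = sqrt y]: [x ln (x/y) = -2 s^2 ln (t/s) >= 2 s^2 (1 - t/s)]. *)
Lemma KL_term_ge (x y : R) : 0 < x -> 0 < y ->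
  (Num.sqrt x - Num.sqrt y) ^+ 2 + (x - y) <= x * ln (x / y).
Proof.
move=> x_gt0 y_gt0; set s := Num.sqrt x; set t := Num.sqrt y.
have s_gt0 : 0 < s by rewrite sqrtr_gt0.
have t_gt0 : 0 < t by rewrite sqrtr_gt0.
have ts_gt0 : 0 < t / s by rewrite divr_gt0.
rewrite -[x](sqr_sqrtr (ltW x_gt0)) -[y](sqr_sqrtr (ltW y_gt0)) -/s -/t.
have -> : s ^+ 2 / t ^+ 2 = (t / s)^-1 ^+ 2 by rewrite invf_div expr_div_n.
rewrite lnXn ?posrE ?invr_gt0 // lnV ?posrE //.
have ln_le : ln (t / s) <= t / s - 1.
  by have := @le_ln1Dx R (t / s - 1); rewrite addrCA subrr addr0; apply; lra.
have : s ^+ 2 * ln (t / s) <= s * t - s ^+ 2.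
  have -> : s * t - s ^+ 2 = s ^+ 2 * (t / s - 1) by field; rewrite gt_eqF.
  by rewrite ler_pM2l ?exprn_gt0.
rewrite sqrrB -mulNrn mulrnAr; set l := ln (t / s); nra.
Qed.

Lemma KL_ge_hellinger a X : simplex a -> simplex X ->
  \sum_j (Num.sqrt (a j) - Num.sqrt (X j)) ^+ 2 <= KL a X.
Proof.
case=> a_gt0 a1 [X_gt0 X1].
have : \sum_j ((Num.sqrt (a j) - Num.sqrt (X j)) ^+ 2 + (a j - X j)) <= KL a X.
  by apply: ler_sum => j _; apply: KL_term_ge.
by rewrite big_split /= sumrB a1 X1 subrr addr0.
Qed.

Lemma KL_ge0 a X : simplex a -> simplex X -> 0 <= KL a X.
Proof.
move=> sa sX; apply: le_trans (KL_ge_hellinger sa sX).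
by apply: sumr_ge0 => j _; apply: sqr_ge0.
Qed.

Lemma KL_le0_eq a X : simplex a -> simplex X -> KL a X <= 0 -> a = X.
Proof.
move=> sa sX KL_le0; have := KL_ge_hellinger sa sX.
case: sa sX => a_gt0 _ [X_gt0 _] hell_le.
have /psumr_eq0P hell0 : \sum_j (Num.sqrt (a j) - Num.sqrt (X j)) ^+ 2 = 0.
  apply/eqP; rewrite eq_le (le_trans hell_le KL_le0).
  by rewrite sumr_ge0 // => j _; apply: sqr_ge0.
apply: funext => j; move/eqP: (hell0 (fun j _ => sqr_ge0 _) j isT).
rewrite sqrf_eq0 subr_eq0 => /eqP sqrt_eq.
by rewrite -(sqr_sqrtr (ltW (a_gt0 j))) sqrt_eq sqr_sqrtr // ltW.
Qed.

End Divergence.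

Section Pythagoras.
Variables (R : realType) (N m : nat) (P : 'I_m.+1 -> 'I_N -> R) (Q : 'I_N -> R).
Hypothesis Q_gt0 : forall j, 0 < Q j.
Hypothesis P_simplex : forall i, simplex (P i).
Implicit Types (X Y : 'I_N -> R).

Definition log_orthogonal X : Prop :=
  forall i, \sum_j (P i j - P ord0 j) * (ln (X j) - ln (Q j)) = 0.

Lemma affL_sum_const X (w : 'I_N -> R) : affL P X ->
  (forall i, \sum_j P i j * w j = \sum_j P ord0 j * w j) ->
  \sum_j X j * w j = \sum_j P ord0 j * w j.
Proof.
move=> [[lam [lam1 XE]] _] Pw.
transitivity (\sum_i lam i * \sum_j P i j * w j).
  under eq_bigr do rewrite XE mulr_suml.
  rewrite exchange_big; apply: eq_bigr => i _.
  by rewrite mulr_sumr; apply: eq_bigr => j _; rewrite mulrA.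
by under eq_bigr do rewrite Pw; rewrite -mulr_suml lam1 mul1r.
Qed.

Lemma KL_pythagoras X Y : affL P X -> log_orthogonal X -> affL P Y ->
  KL Y Q = KL Y X + KL X Q.
Proof.
move=> LX orthX LY; have [_ [X_gt0 _]] := LX; have [_ [Y_gt0 _]] := LY.
have cross Z : affL P Z -> \sum_j Z j * (ln (X j) - ln (Q j)) =
    \sum_j P ord0 j * (ln (X j) - ln (Q j)).
  move=> LZ; apply: affL_sum_const => // i; apply/eqP; rewrite -subr_eq0 -sumrB.
  by rewrite -[X in _ == X](orthX i); apply/eqP/eq_bigr => j _; rewrite mulrBl.
have expand Z : \sum_j Z j * (ln (X j) - ln (Q j)) =
    \sum_j Z j * ln (X j) - \sum_j Z j * ln (Q j).
  by rewrite -sumrB; apply: eq_bigr => j _; rewrite mulrBr.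
move: (cross Y LY); rewrite -(cross X LX) !expand !KL_split //; lra.
Qed.

Lemma log_orthogonal_Iproj X : affL P X -> log_orthogonal X ->
  is_Iproj (affL P) Q X.
Proof.
move=> LX orthX; split => // Y LY.
rewrite (KL_pythagoras LX orthX LY) lerDr.
by apply: KL_ge0; [exact: LY.2 | exact: LX.2].
Qed.

Lemma Iproj_unique X Z : affL P X -> log_orthogonal X ->
  is_Iproj (affL P) Q Z -> Z = X.
Proof.
move=> LX orthX [LZ Zmin]; have := Zmin X LX.
rewrite (KL_pythagoras LX orthX LZ) gerDr => KL_le0.
by apply: KL_le0_eq; [exact: LZ.2 | exact: LX.2 |].
Qed.

Section EntropyGap.
Hypothesis entropy_gap : forall i,
  \sum_j (P i j - P ord0 j) * ln (Q j) = entropy (P ord0) - entropy (P i).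

Lemma KL_subr_log_orthogonal X i : (forall j, 0 < X j) ->
  KL (P i) X - KL (P ord0) X = - \sum_j (P i j - P ord0 j) * (ln (X j) - ln (Q j)).
Proof.
move=> X_gt0; have [Pi_gt0 _] := P_simplex i; have [P0_gt0 _] := P_simplex ord0.
have := entropy_gap i; rewrite !KL_split // /entropy.
have sumBB (F G : 'I_N -> R) : \sum_j (P i j - P ord0 j) * (F j - G j) =
    \sum_j P i j * F j - \sum_j P ord0 j * F j -
    (\sum_j P i j * G j - \sum_j P ord0 j * G j).
  by rewrite -!sumrB; apply: eq_bigr => j _; ring.
have sumB (F : 'I_N -> R) : \sum_j (P i j - P ord0 j) * F j =
    \sum_j P i j * F j - \sum_j P ord0 j * F j.
  by rewrite -!sumrB; apply: eq_bigr => j _; ring.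
rewrite sumBB sumB; lra.
Qed.

Lemma log_orthogonalE X : (forall j, 0 < X j) ->
  log_orthogonal X <-> forall i, KL (P i) X = KL (P ord0) X.
Proof.
move=> X_gt0; split=> [orthX i | eqKL i]; apply/eqP.
  by rewrite -subr_eq0 KL_subr_log_orthogonal // orthX oppr0.
by rewrite -oppr_eq0 -KL_subr_log_orthogonal // eqKL subrr.
Qed.

End EntropyGap.
End Pythagoras.

Section RealFacts.
Variable R : realType.

Lemma ler_term_sum (I : finType) (F : I -> R) j :
  (forall i, 0 <= F i) -> F j <= \sum_i F i.
Proof.
by move=> F_ge0; rewrite (bigD1 j) //= lerDl sumr_ge0.
Qed.

Lemma continuous_sum (T : topologicalType) (I : finType) (f : I -> T -> R) :
  (forall i, continuous (f i)) -> continuous (fun x => \sum_i f i x).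
Proof.
move=> f_cont; rewrite -fct_sumE.
elim/big_ind: _ => // [|g h g_cont h_cont x]; first exact: cst_continuous.
exact: (@continuousD _ R^o _ g h x (g_cont x) (h_cont x)).
Qed.

(* For [t >= 0], bound [q e^t] below by its tangent line at [ln (2p/q)], of slope [2p]. *)
Lemma exp_sub_linear_ge_abs (q p t : R) : 0 < q -> 0 < p ->
  p * `|t| - 2 * p * `|1 - ln (2 * p / q)| <= q * expR t - p * t.
Proof.
move=> q_gt0 p_gt0; set a := ln (2 * p / q).
have qa : q * expR a = 2 * p.
  by rewrite /a lnK ?posrE ?divr_gt0 ?mulr_gt0 //; field; exact: lt0r_neq0.
have norm_ge : - `|1 - a| <= 1 - a by rewrite lerNnormlW.
have norm_ge0 := normr_ge0 (1 - a).
have qet_gt0 : 0 < q * expR t by rewrite mulr_gt0 ?expR_gt0.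
case: (leP 0 t) => t_ge0; last by rewrite ltr0_norm //; nra.
rewrite ger0_norm //.
have : 2 * p * (1 + (t - a)) <= q * expR t.
  have -> : expR t = expR a * expR (t - a) by rewrite -expRD addrC subrK.
  by rewrite mulrA qa ler_pM2l ?mulr_gt0 ?expR_ge1Dx.
nra.
Qed.

Lemma is_derive_exp_sub_affine (q p u b t : R) :
  is_derive t 1 (fun s : R => q * expR (u + s * b) - p * (u + s * b))
    (q * expR (u + t * b) * b - p * b).
Proof.
have -> : (fun s : R => q * expR (u + s * b) - p * (u + s * b)) =
    q \*: (expR \o (fun s => u + s * b)) - p \*: (fun s => u + s * b).
  by apply: funext.
have affine_der : is_derive t 1 (fun s : R => u + s * b) b.
  have -> : (fun s : R => u + s * b) = cst u + b \*: id.
    by apply: funext => s /=; rewrite mulrC.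
  by apply: is_derive_eq; rewrite add0r [_%:A]mulr1.
apply: is_derive_eq.
by rewrite /GRing.scale /= mulrA.
Qed.

End RealFacts.

Arguments ler_term_sum {R I} F j.

Section DualProblem.
Variables (R : realType) (N r : nat) (Q p : 'I_N -> R) (B : 'M[R]_(r, N)).
Hypothesis Q_gt0 : forall j, 0 < Q j.
Hypothesis p_gt0 : forall j, 0 < p j.
Hypothesis B_free : row_free B.

Definition dual_objective (v : 'rV[R]_r) : R :=
  \sum_j (Q j * expR ((v *m B) ord0 j) - p j * (v *m B) ord0 j).

Local Notation G := dual_objective.

Lemma continuous_dual_objective : continuous G.
Proof.
have coord_cont j : continuous (fun v : 'rV[R]_r => (v *m B) ord0 j).
  under [fun v => _]funext do rewrite mxE.
  apply: continuous_sum => k x.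
  by apply: continuousM; [exact: coord_continuous | exact: cst_continuous].
apply: continuous_sum => j x; pose u (v : 'rV[R]_r) : R := (v *m B) ord0 j.
change {for x, continuous ((cst (Q j) \* (expR \o u)) - (cst (p j) \* u))}.
apply: continuousB; apply: continuousM; try exact: cst_continuous.
  by apply: continuous_comp; [exact: coord_cont | exact: continuous_expR].
exact: coord_cont.
Qed.

Lemma dual_objective_sublevel_bounded :
  exists rho, forall v, G v <= G 0 -> forall i, `|v ord0 i| <= rho.
Proof.
pose d j := 2 * p j * `|1 - ln (2 * p j / Q j)|.
pose K := \sum_j Q j + \sum_j d j.
have K_ge0 : 0 <= K.
  rewrite addr_ge0 ?sumr_ge0 // => j _; first exact: ltW.
  by rewrite !mulr_ge0 // ltW.
have G0 : G 0 = \sum_j Q j.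
  by apply: eq_bigr => j _; rewrite mul0mx mxE expR0 mulr1 mulr0 subr0.
have image_bounded v j : G v <= G 0 -> `|(v *m B) ord0 j| <= K / p j.
  rewrite G0 => Gv; rewrite ler_pdivlMr // mulrC.
  have : \sum_k (p k * `|(v *m B) ord0 k| - d k) <= G v.
    by apply: ler_sum => k _; apply: exp_sub_linear_ge_abs.
  have := ler_term_sum (fun k => p k * `|(v *m B) ord0 k|) j
    (fun k => mulr_ge0 (ltW (p_gt0 k)) (normr_ge0 _)).
  rewrite sumrB /K /=; lra.
pose Pi := pinvmx B.
exists (\sum_i \sum_j K / p j * `|Pi j i|) => v Gv i.
have -> : v = (v *m B) *m Pi.
  by apply: (row_free_inj B_free); rewrite mulmxKpV // submxMl.
rewrite mxE; apply: le_trans (ler_norm_sum _ _ _) _.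
apply: le_trans (ler_term_sum (fun i => \sum_j K / p j * `|Pi j i|) i _); last first.
  by move=> k; apply: sumr_ge0 => j _; rewrite mulr_ge0 ?divr_ge0 // ltW.
apply: ler_sum => j _; rewrite normrM ler_wpM2r //.
exact: image_bounded.
Qed.

(* A minimizer over a box containing the sublevel set [G <= G 0] is a global one. *)
Lemma dual_objective_has_min : exists c, forall v, G c <= G v.
Proof.
have [rho rhoP] := dual_objective_sublevel_bounded.
pose box := [set v : 'rV[R]_r | forall i, `[- `|rho|, `|rho|]%classic (v ord0 i)]%classic.
have in_box (v : 'rV[R]_r) : (forall i, `|v ord0 i| <= `|rho|) -> v \in box.
  by move=> v_le; rewrite in_setE => i; rewrite /= in_itv /= -ler_norml.
have G0_box : 0 \in box by apply: in_box => i; rewrite mxE normr0.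
have box_compact : compact box.
  exact: (rV_compact (fun=> @segment_compact R _ _)).
have box_ne0 : (box !=set0)%classic by exists 0; rewrite -in_setE.
have [c _ c_min] := EVT_min_rV box_ne0 box_compact
  (continuous_subspaceT continuous_dual_objective).
exists c => v; have Gc_le := c_min 0 G0_box.
case: (leP (G v) (G 0)) => [Gv_le | Gv_gt]; last exact: le_trans Gc_le (ltW Gv_gt).
apply/c_min/in_box => i; apply: le_trans (rhoP v Gv_le i) (ler_norm _).
Qed.

Lemma dual_objective_min_grad c : (forall v, G c <= G v) ->
  \row_j (Q j * expR ((c *m B) ord0 j) - p j) *m B^T = 0.
Proof.
move=> c_min; apply/rowP => i; set u := c *m B.
pose phi t := G (c + t *: delta_mx ord0 i).
have phiE : phi = fun t =>
    \sum_j (Q j * expR (u ord0 j + t * B i j) - p j * (u ord0 j + t * B i j)).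
  apply: funext => t; apply: eq_bigr => j _.
  by rewrite mulmxDl -scalemxAl -rowE !mxE.
have phi_der (t : R) : is_derive t 1 phi
    (\sum_j (Q j * expR (u ord0 j + t * B i j) * B i j - p j * B i j)).
  by rewrite phiE -fct_sumE; apply: is_derive_sum => j; exact: is_derive_exp_sub_affine.
have phi_crit : is_derive (0 : R) 1 phi 0.
  apply: (@derive1_at_min _ _ (-1) 1).
  - lra.
  - by move=> t _; exact: (@ex_derive _ _ _ _ _ _ _ (phi_der t)).
  - by rewrite in_itv /=; apply/andP; split; lra.
  - by move=> t _; rewrite /phi scale0r addr0.
have := @derive_val _ _ _ _ _ _ _ phi_crit.
rewrite (@derive_val _ _ _ _ _ _ _ (phi_der 0)) => grad0.
by rewrite !mxE -[RHS]grad0; apply: eq_bigr => j _; rewrite !mxE mul0r addr0 mulrBl.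
Qed.

End DualProblem.

Definition direction_mx (R : realType) (m N : nat) (P : 'I_m.+1 -> 'I_N -> R) :
    'M[R]_(m, N) :=
  \matrix_(i, j) (P (lift ord0 i) j - P ord0 j).

Section Existence.
Variables (R : realType) (N m : nat) (P : 'I_m.+1 -> 'I_N -> R) (Q : 'I_N -> R).
Hypothesis Q_gt0 : forall j, 0 < Q j.
Hypothesis P_simplex : forall i, simplex (P i).

Lemma affL_of_direction X : (forall j, 0 < X j) ->
  (\row_j (X j - P ord0 j) <= direction_mx P)%MS -> affL P X.
Proof.
move=> X_gt0 /submxP [cc Xcc].
pose lam k := if unlift ord0 k is Some i then cc ord0 i else 1 - \sum_i cc ord0 i.
have sum_lam (F : 'I_m.+1 -> R) : \sum_k lam k * F k =
    F ord0 + \sum_i cc ord0 i * (F (lift ord0 i) - F ord0).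
  rewrite big_ord_recl /lam unlift_none.
  rewrite [X in _ + X](eq_bigr (fun i => cc ord0 i * F (lift ord0 i))) => [|i _];
    last by rewrite liftK.
  rewrite mulrBl mul1r mulr_suml; under [in RHS]eq_bigr do rewrite mulrBr.
  by rewrite sumrB; lra.
have XE j : X j = \sum_k lam k * P k j.
  have := congr1 (fun M : 'rV[R]_N => M ord0 j) Xcc; rewrite !mxE => Xj.
  rewrite sum_lam -[X j](subrK (P ord0 j)) Xj addrC; congr (_ + _).
  by apply: eq_bigr => i _; rewrite mxE.
have lam1 : \sum_k lam k = 1.
  have := sum_lam (fun=> 1); rewrite [X in _ + X]big1 => [|i _]; last by rewrite subrr mulr0.
  by under eq_bigr do rewrite mulr1; rewrite addr0.
split; first by exists lam.
split=> //; under eq_bigr do rewrite XE.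
rewrite exchange_big /= -[RHS]lam1; apply: eq_bigr => k _.
by rewrite -mulr_sumr; case: (P_simplex k) => _ ->; rewrite mulr1.
Qed.

Lemma exists_log_orthogonal : exists2 X, affL P X & log_orthogonal P Q X.
Proof.
(* The rows of [B] are a basis of the vectors orthogonal to the directions of [L]. *)
pose A := direction_mx P; pose C := cokermx A; pose B := row_base C^T.
have P0_gt0 : forall j, 0 < P ord0 j by case: (P_simplex ord0).
have [c c_min] := dual_objective_has_min Q_gt0 P0_gt0 (row_base_free C^T).
have grad0 := dual_objective_min_grad c_min.
set u := c *m B in grad0; pose X j := Q j * expR (u ord0 j).
have X_gt0 j : 0 < X j by rewrite mulr_gt0 ?expR_gt0.
have Au : A *m u^T = 0.
  rewrite /u; have /submxP [E ->] : (B <= C^T)%MS by rewrite eq_row_base.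
  by rewrite mulmxA trmx_mul trmxK mulmxA mulmx_coker mul0mx.
exists X.
  apply: affL_of_direction => //; rewrite submxE -/C -[C]trmxK.
  have /submxP [D ->] : (C^T <= B)%MS by rewrite eq_row_base.
  by rewrite trmx_mul mulmxA grad0 mul0mx.
move=> i; case: (unliftP ord0 i) => [i' ->|->]; last first.
  by apply: big1 => j _; rewrite subrr mul0r.
have := congr1 (fun M : 'cV[R]_m => M i' ord0) Au; rewrite !mxE => Au_i.
rewrite -[RHS]Au_i; apply: eq_bigr => j _; rewrite [A _ _]mxE [u^T _ _]mxE /X.
by rewrite lnM ?posrE ?expR_gt0 // expRK addrAC subrr add0r.
Qed.

End Existence.

Section ExponentialFamily.
Variables (R : realType) (n : nat) (theta : 'cV[R]_n).

Let theta_ext (k : 'I_n.+1) : R :=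
  if unlift ord0 k is Some j then theta j ord0 else 0.

Lemma Q1theta_gt0 : 0 < Q1theta theta.
Proof.
rewrite /Q1theta invr_gt0 ltr_wpDr // sumr_ge0 // => j _.
exact: expR_ge0.
Qed.

Lemma Qtheta_expR k : Qtheta theta k = Q1theta theta * expR (theta_ext k).
Proof.
by rewrite /Qtheta /theta_ext; case: (unliftP ord0 k) => [j|] _; rewrite ?expR0 ?mulr1.
Qed.

Lemma Qtheta_gt0 k : 0 < Qtheta theta k.
Proof. by rewrite Qtheta_expR mulr_gt0 ?Q1theta_gt0 ?expR_gt0. Qed.

Lemma ln_Qtheta k : ln (Qtheta theta k) = ln (Q1theta theta) + theta_ext k.
Proof. by rewrite Qtheta_expR lnM ?posrE ?Q1theta_gt0 ?expR_gt0 // expRK. Qed.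

Lemma Qtheta_entropy_gap m (P : 'I_m.+1 -> 'I_n.+1 -> R) :
  (forall i, simplex (P i)) -> Psi' P *m theta = bvec P ->
  forall i, \sum_j (P i j - P ord0 j) * ln (Qtheta theta j) =
            entropy (P ord0) - entropy (P i).
Proof.
move=> P_simplex theta_sol i; case: (unliftP ord0 i) => [i' ->|->]; last first.
  by rewrite subrr; apply: big1 => j _; rewrite subrr mul0r.
under eq_bigr do rewrite ln_Qtheta mulrDr.
rewrite big_split /= -mulr_suml sumrB.
case: (P_simplex (lift ord0 i')) => _ ->; case: (P_simplex ord0) => _ ->.
rewrite subrr mul0r add0r.
have := congr1 (fun M : 'cV[R]_m => M i' ord0) theta_sol; rewrite !mxE => <-.
rewrite big_ord_recl /theta_ext unlift_none mulr0 add0r.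
by apply: eq_bigr => j _; rewrite liftK !mxE mulrC.
Qed.

End ExponentialFamily.

Theorem lemma19 (R : realType) (m n : nat)
  (P : 'I_m.+1 -> 'I_n.+1 -> R)
  (hP : forall i, simplex (P i))
  (hgp : general_position P)
  (theta : 'cV[R]_n)
  (htheta : Psi' P *m theta = bvec P) :
  (exists Q0, is_Iproj (affL P) (Qtheta theta) Q0) /\
  (forall Q0, is_Iproj (affL P) (Qtheta theta) Q0 ->
     [/\ affL P Q0,
         (forall i, KL (P i) Q0 = KL (P ord0) Q0) &
         (forall Q2, affL P Q2 ->
            (forall i, KL (P i) Q2 = KL (P ord0) Q2) -> Q2 = Q0)]).
Proof.
have Q_gt0 := @Qtheta_gt0 R n theta.
have gap := Qtheta_entropy_gap hP htheta.
have [X LX orthX] := exists_log_orthogonal Q_gt0 hP.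
have projX := log_orthogonal_Iproj Q_gt0 LX orthX.
split; first by exists X.
move=> Q0 projQ0; rewrite (Iproj_unique Q_gt0 LX orthX projQ0).
split=> // [|Q2 LQ2 eqKL2].
  by apply/(log_orthogonalE hP gap LX.2.1).
have orthQ2 := proj2 (log_orthogonalE hP gap LQ2.2.1) eqKL2.
by rewrite (Iproj_unique Q_gt0 LQ2 orthQ2 projX).
Qed.
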